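(* Let $\mathfrak{H}$ be a Euclidean space and let $(\mathcal{X},\mathsf{S},\gamma,(\Lambda_{a})_{a\in\mathcal{A}})$ be a spectral decomposition system for $\mathfrak{H}$ such that the set $\{\Lambda_a\}_{a\in\mathcal{A}}$ is closed in $\mathscr{L}(\mathcal{X},\mathfrak{H})$, and suppose in addition that $\mathsf{S}$ is a finite group. Then for all $X,Y\in\mathfrak{H}$, \[ \gamma(X+Y)-\gamma(X)\in\operatorname{conv}\bigl(\mathsf{S}\cdot\gamma(Y)\bigr), \] where $\mathsf{S}\cdot z=\{\mathsf{s}\cdot z:\mathsf{s}\in\mathsf{S}\}$.
   Context: A Euclidean space is a finite-dimensional real Hilbert space; $\mathscr{L}(\mathcal{X},\mathfrak{H})$ carries the operator-norm topology. A spectral decomposition system for a Euclidean space $\mathfrak{H}$ is a tuple $(\mathcal{X},\mathsf{S},\gamma,(\Lambda_a)_{a\in\mathcal{A}})$ where $\mathcal{X}$ is a Euclidean space, $\mathsf{S}$ is a group acting on $\mathcal{X}$ such that each map $x\mapsto \mathsf{s}\cdot x$ is a linear isometry, $\gamma\colon\mathfrak{H}\to\mathcal{X}$ is a mapping, and each $\Lambda_a\colon\mathcal{X}\to\mathfrak{H}$ is a linear isometry, such that: [A] there exists a mapping $\tau\colon\mathcal{X}\to\mathcal{X}$ with $\tau(\mathsf{s}\cdot x)=\tau(x)$ for all $\mathsf{s},x$, $\tau(x)\in\mathsf{S}\cdot x$ for all $x$, and $\gamma\circ\Lambda_a=\tau$ for all $a\in\mathcal{A}$; [B] for every $X\in\mathfrak{H}$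 there exists $a\in\mathcal{A}$ with $X=\Lambda_a\gamma(X)$; [C] $\langle X,Y\rangle\le\langle\gamma(X),\gamma(Y)\rangle$ for all $X,Y\in\mathfrak{H}$. *)

From HB Require Import structures.
From mathcomp Require Import all_boot all_order all_algebra all_fingroup.
From mathcomp Require Import all_classical all_reals all_analysis.
Set Implicit Arguments. Unset Strict Implicit. Unset Printing Implicit Defensive.
Import Order.TTheory GRing.Theory Num.Theory.
Import numFieldNormedType.Exports.
Local Open Scope ring_scope.
Local Open Scope classical_set_scope.

(* A Euclidean space of dimension n is modelled (up to isometric isomorphism)
   by row vectors 'rV[R]_n with the standard inner product. *)
Definition dotp (R : realType) (n : nat) (u v : 'rV[R]_n) : R := (u *m v^T) 0 0.
Definition enorm (R : realType) (n : nat) (u : 'rV[R]_n) : R := Num.sqrt (dotp u u).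

Definition lin_isometry (R : realType) (m n : nat) (f : 'rV[R]_m -> 'rV[R]_n) : Prop :=
  (forall (a : R) (x y : 'rV[R]_m), f (a *: x + y) = a *: f x + f y) /\
  (forall x, enorm (f x) = enorm x).

(* linear map X -> H represented by a matrix (acting on rows on the right) *)
Definition lapp (R : realType) (m n : nat) (L : 'M[R]_(m, n)) (x : 'rV[R]_m) : 'rV[R]_n :=
  x *m L.

Definition isometric_action (R : realType) (m : nat) (gT : finGroupType)
    (act : gT -> 'rV[R]_m -> 'rV[R]_m) : Prop :=
  (forall x, act 1%g x = x) /\
  (forall s t x, act (s * t)%g x = act s (act t x)) /\
  (forall s, lin_isometry (act s)).

Definition orbit_set (R : realType) (m : nat) (gT : finGroupType)
    (act : gT -> 'rV[R]_m -> 'rV[R]_m) (x : 'rV[R]_m) : set 'rV[R]_m :=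
  [set act s x | s in [set: gT]].

Definition conv_hull (R : realType) (m : nat) (A : set 'rV[R]_m) : set 'rV[R]_m :=
  [set z | exists (k : nat) (w : 'I_k -> R) (p : 'I_k -> 'rV[R]_m),
     (forall i, A (p i)) /\ (forall i, 0 <= w i) /\ (\sum_(i < k) w i = 1) /\
     z = \sum_(i < k) w i *: p i].

(* spectral decomposition system (X = 'rV_m, H = 'rV_n) *)
Definition spectral_decomposition_system (R : realType) (m n : nat)
    (gT : finGroupType) (act : gT -> 'rV[R]_m -> 'rV[R]_m)
    (gamma : 'rV[R]_n -> 'rV[R]_m) (A : Type) (Lam : A -> 'M[R]_(m, n)) : Prop :=
  isometric_action act /\
  (forall a, lin_isometry (lapp (Lam a))) /\
  (exists tau : 'rV[R]_m -> 'rV[R]_m,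
     (forall s x, tau (act s x) = tau x) /\
     (forall x, orbit_set act x (tau x)) /\
     (forall a x, gamma (lapp (Lam a) x) = tau x)) /\
  (forall X, exists a, X = lapp (Lam a) (gamma X)) /\
  (forall X Y, dotp X Y <= dotp (gamma X) (gamma Y)).

From HB Require Import structures.
From mathcomp Require Import all_boot all_order all_algebra all_fingroup.
From mathcomp Require Import all_classical all_reals all_analysis.
From mathcomp Require Import ring lra.
Set Implicit Arguments. Unset Strict Implicit. Unset Printing Implicit Defensive.
Import Order.TTheory GRing.Theory Num.Theory.
Import numFieldNormedType.Exports.
Local Open Scope ring_scope.
Local Open Scope classical_set_scope.

(* For a τ-fixed vector f and any V, ⟨f, γ V⟩ = max_a ⟨Λ_a f, V⟩, attained at every a with
   V = Λ_a γ V.  Hence for w in the span of the τ-fixed vectors the increment of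
   t ↦ ⟨w, γ(X + tY)⟩ over [t, t + h] is h⟨Λ_a w, Y⟩ ≤ h⟨τ w, γ Y⟩ up to an error of order
   h‖Λ_a - Λ_b‖, where a and b decompose X + (t + h)Y and X + tY.  Closedness of {Λ_a} makes
   decompositions upper semicontinuous, so the error is o(h) and a Dini-derivative argument
   gives ⟨w, γ(X + Y) - γ X⟩ ≤ ⟨τ w, γ Y⟩ = ⟨w, s⁻¹·γ Y⟩ for some s.  As S is finite, the
   τ-fixed vectors span: a vector orthogonal to all of them would force the finitely many
   hyperplanes ⟨x, s⁻¹·v⟩ = 0 to cover the space.  So the inequality holds for every w, and
   the nearest point of the convex hull of S·γ Y to γ(X + Y) - γ X must be that point. *)

Section InnerProduct.
Context {R : realType} {n : nat}.
Implicit Types (u v w : 'rV[R]_n) (a : R).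

Lemma dotpE u v : dotp u v = \sum_i u 0 i * v 0 i.
Proof. by rewrite /dotp !mxE; apply: eq_bigr => i _; rewrite mxE. Qed.

Lemma dotpC u v : dotp u v = dotp v u.
Proof. by rewrite !dotpE; apply: eq_bigr => i _; rewrite mulrC. Qed.

Lemma dotpDl u v w : dotp (u + v) w = dotp u w + dotp v w.
Proof. by rewrite !dotpE -big_split; apply: eq_bigr => i _; rewrite mxE mulrDl. Qed.

Lemma dotpZl a u w : dotp (a *: u) w = a * dotp u w.
Proof. by rewrite !dotpE mulr_sumr; apply: eq_bigr => i _; rewrite mxE mulrA. Qed.

Lemma dotpNl u w : dotp (- u) w = - dotp u w.
Proof. by rewrite -scaleN1r dotpZl mulN1r. Qed.

Lemma dotpBl u v w : dotp (u - v) w = dotp u w - dotp v w.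
Proof. by rewrite dotpDl dotpNl. Qed.

Lemma dotp0l w : dotp 0 w = 0.
Proof. by rewrite -(scale0r 0) dotpZl mul0r. Qed.

Lemma dotpDr u v w : dotp w (u + v) = dotp w u + dotp w v.
Proof. by rewrite dotpC dotpDl !(dotpC w). Qed.

Lemma dotpZr a u w : dotp w (a *: u) = a * dotp w u.
Proof. by rewrite dotpC dotpZl dotpC. Qed.

Lemma dotpBr u v w : dotp w (u - v) = dotp w u - dotp w v.
Proof. by rewrite !(dotpC w) dotpBl. Qed.

Lemma sqr_coord_le_dotp u i : u 0 i ^+ 2 <= dotp u u.
Proof.
rewrite dotpE (bigD1 i) //= -expr2 lerDl.
by apply: sumr_ge0 => j _; rewrite -expr2 sqr_ge0.
Qed.

Lemma dotp_ge0 u : 0 <= dotp u u.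
Proof. by rewrite dotpE; apply: sumr_ge0 => i _; rewrite -expr2 sqr_ge0. Qed.

Lemma dotp_le0_eq0 u : dotp u u <= 0 -> u = 0.
Proof.
move=> u_le0; apply/rowP => j; rewrite mxE; apply/eqP; rewrite -sqrf_eq0 eq_le sqr_ge0 andbT.
exact: le_trans (sqr_coord_le_dotp u j) u_le0.
Qed.

Lemma dotp_subZ u v a :
  dotp (u - a *: v) (u - a *: v) = dotp u u - 2 * a * dotp u v + a ^+ 2 * dotp v v.
Proof. by rewrite !dotpBl !dotpBr !dotpZl !dotpZr (dotpC v u); ring. Qed.

Lemma enormZ a u : enorm (a *: u) = `|a| * enorm u.
Proof. by rewrite /enorm dotpZl dotpZr mulrA -expr2 sqrtrM ?sqr_ge0 // sqrtr_sqr. Qed.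

End InnerProduct.

Lemma lipschitz_continuous (K : numFieldType) (V W : normedModType K) (f : V -> W) (C : K) :
  0 < C -> (forall x y, `|f x - f y| <= C * `|x - y|) -> continuous f.
Proof.
move=> C0 f_lip x; apply/cvgrPdist_lt => e e0.
apply/nbhs_normP; exists (e / C) => [|y /= xy]; first by rewrite /= divr_gt0.
by apply: le_lt_trans (f_lip x y) _; rewrite -ltr_pdivlMl // mulrC.
Qed.

Section MatrixNorm.
Context {R : realType}.

Lemma coord_le_mx_norm p q (E : 'M[R]_(p, q)) i j : `|E i j| <= `|E|.
Proof. by rewrite [leRHS]/Num.norm /= mx_normrE; apply/bigmax_geP; right; exists (i, j). Qed.

Lemma mx_norm_le p q (E : 'M[R]_(p, q)) (b : R) :
  0 <= b -> (forall i j, `|E i j| <= b) -> `|E| <= b.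
Proof.
move=> b0 Eb; rewrite [leLHS]/Num.norm /= mx_normrE.
by apply: bigmax_le => // -[i j] _; exact: Eb.
Qed.

Lemma mx_norm_mulmx_le p q r (E : 'M[R]_(p, q)) (F : 'M[R]_(q, r)) :
  `|E *m F| <= q%:R * (`|E| * `|F|).
Proof.
apply: mx_norm_le => [|i j]; first by rewrite mulr_ge0 ?mulr_ge0.
rewrite mxE; apply: le_trans (ler_norm_sum _ _ _) _.
rewrite mulr_natl -[q in _ *+ q]card_ord -sumr_const; apply: ler_sum => k _.
by rewrite normrM ler_pM ?coord_le_mx_norm.
Qed.

Lemma dotp_norm_le n (u v : 'rV[R]_n) : `|dotp u v| <= n%:R * (`|u| * `|v|).
Proof.
rewrite dotpE; apply: le_trans (ler_norm_sum _ _ _) _.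
rewrite mulr_natl -[n in _ *+ n]card_ord -sumr_const; apply: ler_sum => k _.
by rewrite normrM ler_pM ?coord_le_mx_norm.
Qed.

Lemma mx_norm_le_enorm n (u : 'rV[R]_n) : `|u| <= enorm u.
Proof.
apply: mx_norm_le => [|i j]; first exact: sqrtr_ge0.
by rewrite (ord1 i) -sqrtr_sqr ler_sqrt ?dotp_ge0 ?sqr_coord_le_dotp.
Qed.

Lemma mulmx_continuous_left p q r (F : 'M[R]_(q, r)) :
  continuous (fun E : 'M[R]_(p, q) => E *m F).
Proof.
apply: (@lipschitz_continuous _ _ _ _ (q%:R * `|F| + 1)) => [|E E'].
  by rewrite ltr_pwDr ?mulr_ge0.
rewrite -mulmxBl mulrC; apply: le_trans (mx_norm_mulmx_le _ _) _.
by rewrite mulrCA ler_wpM2l // lerDl.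
Qed.

Lemma mulmx_continuous_right p q r (E : 'M[R]_(p, q)) :
  continuous (fun F : 'M[R]_(q, r) => E *m F).
Proof.
apply: (@lipschitz_continuous _ _ _ _ (q%:R * `|E| + 1)) => [|F F'].
  by rewrite ltr_pwDr ?mulr_ge0.
rewrite -mulmxBr; apply: le_trans (mx_norm_mulmx_le _ _) _.
by rewrite mulrA ler_wpM2r // lerDl.
Qed.

Lemma mx_bounded_closed_compact p q (K : set 'M[R]_(p, q)) (b : R) :
  closed K -> (forall E, K E -> `|E| <= b) -> compact K.
Proof.
move=> K_closed K_bounded.
have vec_mx_le u : `|@vec_mx R p q u| <= `|u|.
  by apply: mx_norm_le => // i j; rewrite mxE coord_le_mx_norm.
have vec_mx_cont : continuous (@vec_mx R p q).
  apply: (@lipschitz_continuous _ _ _ _ 1) => // u v.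
  by rewrite mul1r -linearB vec_mx_le.
have -> : K = vec_mx @` (vec_mx @^-1` K).
  apply/seteqP; split => [E KE|_ [u Ku <-] //].
  by exists (mxvec E); rewrite /= mxvecK.
apply/continuous_compact; first exact: continuous_subspaceT.
apply: bounded_closed_compact; last exact: preimage_closed.
exists b; split; first exact: num_real.
move=> c bc u /K_bounded uK; apply: le_trans (ltW bc).
apply: mx_norm_le => [|i k]; first exact: le_trans (normr_ge0 _) uK.
rewrite (ord1 i); case/mxvec_indexP: k => i' j'.
by rewrite -[u]vec_mxK mxvecE; apply: le_trans (coord_le_mx_norm _ i' j') uK.
Qed.

End MatrixNorm.

Section Isometries.
Variables (R : realType) (p q : nat) (f : 'rV[R]_p -> 'rV[R]_q).
Hypothesis f_iso : lin_isometry f.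

Lemma lin_isometryD x y : f (x + y) = f x + f y.
Proof. by rewrite -[x]scale1r (proj1 f_iso) !scale1r. Qed.

Lemma lin_isometry0 : f 0 = 0.
Proof. by apply: (@addrI _ (f 0)); rewrite -lin_isometryD !addr0. Qed.

Lemma lin_isometry_dotp x y : dotp (f x) (f y) = dotp x y.
Proof.
have dotp_ff z : dotp (f z) (f z) = dotp z z.
  have /(congr1 (fun t => t ^+ 2)) := (proj2 f_iso) z.
  by rewrite !sqr_sqrtr ?dotp_ge0.
have := dotp_ff (x + y); rewrite lin_isometryD !dotpDl !dotpDr !dotp_ff.
by rewrite (dotpC (f y)) (dotpC y); lra.
Qed.

End Isometries.

Section IsometricAction.
Variables (R : realType) (m : nat) (gT : finGroupType).
Variable act : gT -> 'rV[R]_m -> 'rV[R]_m.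
Hypothesis act_iso : isometric_action act.

Lemma actKV (s : gT) x : act (s^-1)%g (act s x) = x.
Proof. by case: act_iso => act1 [actM _]; rewrite -actM mulVg act1. Qed.

Lemma act_dotpV (s : gT) x y : dotp (act s x) y = dotp x (act (s^-1)%g y).
Proof.
rewrite -{1}(actKV (s^-1)%g y) invgK.
by apply: lin_isometry_dotp; case: act_iso => _ [].
Qed.

Lemma act_eq0 (s : gT) x : (act s x == 0) = (x == 0).
Proof.
have act0 t : act t 0 = 0 by apply: lin_isometry0; case: act_iso => _ [].
apply/eqP/eqP => [|->]; last exact: act0.
by move=> sx0; rewrite -(actKV s x) sx0 act0.
Qed.

End IsometricAction.

Lemma poly_nonroot (R : numDomainType) (P : {poly R}) : P != 0 -> exists t, ~~ root P t.
Proof.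
move=> P_neq0; have uniq_nat : uniq [seq (i%:R : R) | i <- iota 0 (size P)].
  by rewrite map_inj_uniq ?iota_uniq // => i j /eqP; rewrite eqr_nat => /eqP.
have := contraNN (fun roots => max_poly_roots P_neq0 roots uniq_nat).
rewrite size_map size_iota ltnn => /(_ isT) /allPn [t _ ?].
by exists t.
Qed.

Lemma avoid_hyperplanes (R : realType) m (I : finType) (v : I -> 'rV[R]_m) :
  (forall i, v i != 0) -> exists x, forall i, dotp x (v i) != 0.
Proof.
move=> v_neq0; pose P i : {poly R} := \sum_(j < m) v i 0 j *: 'X^j.
have P_moment i t : (P i).[t] = dotp (\row_j t ^+ j) (v i).
  rewrite /P horner_sum dotpE; apply: eq_bigr => j _.
  by rewrite hornerZ hornerXn mxE mulrC.
have P_neq0 i : P i != 0.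
  apply: contra (v_neq0 i) => /eqP Pi0; apply/eqP/rowP => j.
  have /(congr1 (fun Q : {poly R} => Q`_j)) := Pi0.
  rewrite /P coef_sum (bigD1 j) //= big1 => [|k kj]; rewrite coefZ coefXn.
    by rewrite eqxx mulr1 addr0 mxE coef0.
  by rewrite eq_sym (inj_eq val_inj) (negbTE kj) mulr0.
have /poly_nonroot [t] : \prod_i P i != 0 by apply/prodf_neq0 => i _.
rewrite rootE horner_prod => /prodf_neq0 nz.
by exists (\row_j t ^+ j) => i; rewrite -P_moment; apply: nz.
Qed.

Lemma fixed_nonorthogonal (R : realType) m (gT : finGroupType)
    (act : gT -> 'rV[R]_m -> 'rV[R]_m) (tau : 'rV[R]_m -> 'rV[R]_m) :
  isometric_action act -> (forall s x, tau (act s x) = tau x) ->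
  (forall x, exists s, tau x = act s x) ->
  forall v, v != 0 -> exists2 f, tau f = f & dotp f v != 0.
Proof.
move=> act_iso tau_act tau_orbit v v_neq0.
have [x x_avoids] : exists x, forall s : gT, dotp x (act (s^-1)%g v) != 0.
  by apply: avoid_hyperplanes => s; rewrite act_eq0.
have [s tau_x] := tau_orbit x.
exists (tau x); first by rewrite {1}tau_x tau_act.
by rewrite tau_x act_dotpV.
Qed.

Lemma row_full_of_nonorthogonal (R : realType) m (P : 'rV[R]_m -> Prop) :
  (forall v, v != 0 -> exists2 f, P f & dotp f v != 0) ->
  exists k (B : 'M[R]_(k, m)), (forall i, P (row i B)) /\ row_full B.
Proof.
move=> nonorth.
suff /(_ m (leqnn m)) [k [B [BP rkB]]] : forall r, (r <= m)%N ->
    exists k (B : 'M[R]_(k, m)), (forall i, P (row i B)) /\ (r <= \rank B)%N.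
  by exists k, B; rewrite /row_full eqn_leq rank_leq_col.
elim=> [|r IH] r_le; first by exists 0%N, 0; split=> // -[].
have [k [B [BP rkB]]] := IH (ltnW r_le).
have [lt_r_rkB|] := ltnP r (\rank B); first by exists k, B.
move=> /(conj rkB)/andP; rewrite -eqn_leq => /eqP/esym rkBr.
have : kermx B^T != 0 by rewrite -mxrank_eq0 mxrank_ker mxrank_tr rkBr subn_eq0 -ltnNge.
case/rowV0Pn => v /sub_kermxP vB v_neq0.
have [f Pf fv] := nonorth v v_neq0.
have f_notin_B : ~~ (f <= B)%MS.
  apply: contra fv => /submxP [u ->].
  by rewrite /dotp -mulmxA -[B]trmxK -trmx_mul vB trmx0 mulmx0 mxE.
exists (k + 1)%N, (col_mx B f); split.
  move=> i; rewrite -[i](@splitK k 1); case: (fintype.split i) => j /=.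
    by rewrite rowKu.
  by rewrite rowKd row_id.
have : (B < col_mx B f)%MS.
  rewrite ltmxE -addsmxE addsmxSl /=; apply: contra f_notin_B.
  by rewrite -addsmxE addsmx_sub => /andP [].
by move/rank_ltmx; rewrite rkBr.
Qed.

Lemma dotp_continuous (R : realType) n : continuous (fun v : 'rV[R]_n => dotp v v).
Proof.
have -> : (fun v : 'rV[R]_n => dotp v v) = fun v => \sum_j v 0 j * v 0 j.
  by apply/funext => v; rewrite dotpE.
apply: continuous_big => [|j _ v]; first exact: add_continuous.
by apply: continuousM; apply: coord_continuous.
Qed.

Lemma nearest_point_obtuse (R : realType) m (z q c : 'rV[R]_m) :
  (forall t, 0 < t -> t <= 1 ->
     dotp (z - q) (z - q) <= dotp (z - (q + t *: (c - q))) (z - (q + t *: (c - q)))) ->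
  dotp (z - q) (c - q) <= 0.
Proof.
move=> q_nearest; set a := dotp _ (c - q); set b := dotp (c - q) (c - q).
have b_ge0 : 0 <= b by exact: dotp_ge0.
rewrite leNgt; apply/negP => a_gt0.
pose t := Num.min 1 (a / (b + 1)).
have t_gt0 : 0 < t by rewrite lt_min ltr01 divr_gt0 // ltr_wpDl.
have t_le1 : t <= 1 by rewrite ge_min lexx.
have tb_lt_a : t * b < a.
  have : t * (b + 1) <= a by rewrite -ler_pdivlMr ?ltr_wpDl // ge_min lexx orbT.
  by nra.
have := q_nearest t t_gt0 t_le1.
by rewrite opprD addrA dotp_subZ -/a -/b; nra.
Qed.

Section Simplex.
Variables (R : realType) (k : nat).

Definition simplex : set 'rV[R]_k := [set l | (forall i, 0 <= l 0 i) /\ \sum_i l 0 i = 1].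

Lemma simplex_delta i : simplex (delta_mx 0 i).
Proof.
split => [j|]; first by rewrite mxE; case: (_ && _).
rewrite (bigD1 i) //= big1 ?addr0 => [|j /negbTE ji]; first by rewrite mxE !eqxx.
by rewrite mxE ji andbF.
Qed.

Lemma simplex_segment l l' t :
  simplex l -> simplex l' -> 0 <= t <= 1 -> simplex ((1 - t) *: l + t *: l').
Proof.
move=> [l_ge0 l_sum] [l'_ge0 l'_sum] /andP [t_ge0 t_le1]; split => [j|].
  by rewrite !mxE addr_ge0 // mulr_ge0 // subr_ge0.
under eq_bigr do rewrite !mxE.
by rewrite big_split /= -!mulr_sumr l_sum l'_sum; ring.
Qed.

Lemma simplex_compact : compact simplex.
Proof.
have unit_cube : compact [set l : 'rV[R]_k | forall i, `[(0 : R), 1]%classic (l 0 i)].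
  by apply: (@rV_compact _ _ (fun=> `[(0 : R), 1]%classic)) => i; exact: segment_compact.
apply: (subclosed_compact _ unit_cube); last first.
  move=> l [l_ge0 l_sum] i; rewrite /= in_itv /= l_ge0 -l_sum (bigD1 i) //= lerDl.
  by apply: sumr_ge0 => j _.
have -> : simplex = \bigcap_i [set l | 0 <= l 0 i] `&` [set l | \sum_i l 0 i = 1].
  apply/seteqP; split => l [l_ge0 l_sum]; split => // i; first by move=> _; apply: l_ge0.
  exact: l_ge0 i I.
apply: closedI.
  apply: closed_bigI => i _.
  apply: (@preimage_closed _ _ (fun l : 'rV[R]_k => l 0 i) [set x | 0 <= x]) => [l _|].
    exact: coord_continuous.
  exact: closed_ge.
apply: (@preimage_closed _ _ (fun l : 'rV[R]_k => \sum_i l 0 i) [set 1]) => [l _|].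
  by apply: continuous_big => [|i _]; [exact: add_continuous | exact: coord_continuous].
exact: closed_eq.
Qed.

End Simplex.

Lemma conv_hull_of_separation (R : realType) m k (A : set 'rV[R]_m)
    (p : 'I_k -> 'rV[R]_m) (z : 'rV[R]_m) :
  (forall i, A (p i)) -> (forall w, exists i, dotp w z <= dotp w (p i)) -> conv_hull A z.
Proof.
move=> Ap separated; have [i0 _] := separated 0.
pose P : 'M[R]_(k, m) := \matrix_(i, j) p i 0 j.
have rowP_ i : row i P = p i by apply/rowP => j; rewrite !mxE.
pose f l := dotp (z - l *m P) (z - l *m P).
have f_cont : continuous f.
  have affine_cont : continuous (fun l : 'rV[R]_k => z - l *m P).
    by move=> l; apply: continuousB (@cst_continuous _ _ z l) (@mulmx_continuous_left R 1 k m P l).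
  by move=> l; exact: continuous_comp (affine_cont l) (@dotp_continuous R m _).
have [l /set_mem l_simplex l_min] := compact_EVT_min (ex_intro _ _ (@simplex_delta R k i0))
  (@simplex_compact R k) (continuous_subspaceT f_cont).
set q := l *m P in l_min; set d := z - q.
have obtuse i : dotp d (p i - q) <= 0.
  apply: nearest_point_obtuse => t t_gt0 t_le1.
  have lt_simplex : simplex ((1 - t) *: l + t *: delta_mx 0 i).
    by apply: simplex_segment; [|exact: simplex_delta|rewrite (ltW t_gt0)].
  have := l_min _ (mem_set lt_simplex); rewrite /f mulmxDl -!scalemxAl -rowE rowP_.
  by rewrite scalerBr scalerBl scale1r -/q addrAC addrA.
have [i sep_i] := separated d.
have d0 : d = 0.
  apply: dotp_le0_eq0; have := obtuse i; rewrite dotpBr.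
  have : dotp d z = dotp d d + dotp d q by rewrite -dotpDr subrK.
  by lra.
case: l_simplex => l_ge0 l_sum; exists k, (fun i => l 0 i), p; do 3!split => //.
have -> : \sum_i l 0 i *: p i = q.
  by rewrite /q mulmx_sum_row; apply: eq_bigr => j _; rewrite rowP_.
by apply/eqP; rewrite -subr_eq0 -/d d0.
Qed.

Lemma continuous_le_from_left (R : realType) (g : R -> R) (T c : R) :
  continuous g -> 0 < T -> (forall s, 0 <= s -> s < T -> g s <= c) -> g T <= c.
Proof.
move=> g_cont T_gt0 g_below; rewrite leNgt; apply/negP => gT_gt.
have /cvgrPdist_lt/(_ (g T - c)) := g_cont T; rewrite subr_gt0 => /(_ gT_gt).
case/nbhs_normP => r r_gt0 near_T.
pose s := T - Num.min T r / 2.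
have min_gt0 : 0 < Num.min T r by rewrite lt_min r_gt0 T_gt0.
have [min_leT min_ler] : Num.min T r <= T /\ Num.min T r <= r.
  by split; rewrite ge_min lexx ?orbT.
have := near_T s; rewrite /= /s opprB addrC subrK ger0_norm; last lra.
have := g_below s; have := ler_norm (g T - g s); rewrite /s; lra.
Qed.

Lemma right_nonincreasing_le (R : realType) (g : R -> R) :
  continuous g ->
  (forall t, 0 <= t -> t < 1 ->
     exists2 d, 0 < d & forall h, 0 < h -> h < d -> g (t + h) <= g t) ->
  g 1 <= g 0.
Proof.
move=> g_cont g_right.
pose S := [set t | 0 <= t <= 1 /\ forall s, 0 <= s <= t -> g s <= g 0].
have S0 : S 0 by split=> [|s s0]; [rewrite lexx ler01 | have -> : s = 0 by lra].
have S_sup : has_sup S by split; [exists 0 | exists 1 => t [] /andP []].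
set T := sup S.
have T_ge0 : 0 <= T by exact: sup_upper_bound.
have T_le1 : T <= 1 by apply: ge_sup => [|t [] /andP []]; first by exists 0.
have below s : 0 <= s -> s < T -> g s <= g 0.
  move=> s_ge0 sT; have Ts_gt0 : 0 < T - s by rewrite subr_gt0.
  have [t [_ St] ts] := sup_adherent Ts_gt0 S_sup.
  apply: St; rewrite -/T in ts; lra.
have gT : g T <= g 0.
  have [->|T_neq0] := eqVneq T 0; first exact: lexx.
  by apply: continuous_le_from_left; rewrite // lt_def T_neq0.
suff T1 : T = 1 by rewrite -T1.
apply/eqP; rewrite eq_le T_le1 /= leNgt; apply/negP => T_lt1.
have [d d_gt0 g_dec] := g_right T T_ge0 T_lt1.
pose h := Num.min d (1 - T) / 2.
have min_gt0 : 0 < Num.min d (1 - T) by rewrite lt_min d_gt0 subr_gt0.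
have [min_led min_le1T] : Num.min d (1 - T) <= d /\ Num.min d (1 - T) <= 1 - T.
  by split; rewrite ge_min lexx ?orbT.
have : S (T + h).
  split=> [|s /andP [s_ge0 s_le]]; first by apply/andP; split; rewrite /h; lra.
  have [sT|Ts] := ltrP s T; first exact: below.
  have [-> //|sT] := eqVneq s T.
  have s_pos : 0 < s - T by rewrite subr_gt0 lt_def sT.
  have sTd : s - T < d by move: s_le; rewrite /h; lra.
  by have := g_dec (s - T) s_pos sTd; rewrite addrCA subrr addr0; lra.
by move/(sup_upper_bound S_sup); rewrite -/T /h; lra.
Qed.

Lemma dini_le (R : realType) (psi : R -> R) (c : R) :
  continuous psi ->
  (forall t, 0 <= t -> t < 1 -> forall e, 0 < e ->
     exists2 d, 0 < d & forall h, 0 < h -> h < d -> psi (t + h) - psi t <= (c + e) * h) ->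
  psi 1 - psi 0 <= c.
Proof.
move=> psi_cont psi_right; apply/ler_addgt0Pr => e e_gt0.
pose g t := psi t - (c + e) * t.
have g_cont : continuous g.
  move=> t; apply: continuousB; first exact: psi_cont.
  exact: continuousM (@cst_continuous _ _ (c + e) t) cvg_id.
have : g 1 <= g 0.
  apply: right_nonincreasing_le => // t t_ge0 t_lt1.
  have [d d_gt0 psi_dec] := psi_right t t_ge0 t_lt1 e e_gt0.
  by exists d => // h h_gt0 hd; have := psi_dec h h_gt0 hd; rewrite /g; lra.
by rewrite /g mulr1 mulr0; lra.
Qed.

Lemma dotp_mulmx_le (R : realType) m n (x : 'rV[R]_m) (E : 'M[R]_(m, n)) (y : 'rV[R]_n) :
  `|dotp (x *m E) y| <= `|E| * (n%:R * m%:R * `|x| * `|y|).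
Proof.
apply: le_trans (dotp_norm_le _ _) _.
have := ler_wpM2l (ler0n _ n) (ler_wpM2r (normr_ge0 y) (mx_norm_mulmx_le x E)).
by lra.
Qed.

Section SpectralSystem.
Variables (R : realType) (m n : nat) (A : Type) (Lam : A -> 'M[R]_(m, n)).
Variables (gamma : 'rV[R]_n -> 'rV[R]_m) (tau : 'rV[R]_m -> 'rV[R]_m).
Hypothesis Lam_dotp : forall a x y, dotp (x *m Lam a) (y *m Lam a) = dotp x y.
Hypothesis gamma_Lam : forall a x, gamma (x *m Lam a) = tau x.
Hypothesis dotp_le_gamma : forall X Y, dotp X Y <= dotp (gamma X) (gamma Y).

Definition decomposes a X := X = gamma X *m Lam a.

Hypothesis decomposition : forall X, exists a, decomposes a X.

Lemma enorm_Lam a x : enorm (x *m Lam a) = enorm x.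
Proof. by rewrite /enorm Lam_dotp. Qed.

Lemma Lam_entry_le1 a i j : `|Lam a i j| <= 1.
Proof.
have e_i_unit : enorm (delta_mx 0 i : 'rV[R]_m) = 1.
  rewrite /enorm dotpE (bigD1 i) //= big1 => [|k /negbTE ki]; last first.
    by rewrite mxE ki andbF mul0r.
  by rewrite !mxE !eqxx mulr1 addr0 sqrtr1.
rewrite -e_i_unit -(enorm_Lam a); apply: le_trans (mx_norm_le_enorm _).
by rewrite -rowE; have := coord_le_mx_norm (row i (Lam a)) 0 j; rewrite mxE.
Qed.

Lemma dotp_decomposes a x V : decomposes a V -> dotp (x *m Lam a) V = dotp x (gamma V).
Proof. by move=> dV; rewrite {1}dV Lam_dotp. Qed.

Lemma dotp_Lam_le a x V : dotp (x *m Lam a) V <= dotp (tau x) (gamma V).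
Proof. by rewrite -(gamma_Lam a); exact: dotp_le_gamma. Qed.

Lemma gamma_contraction V W : enorm (gamma V - gamma W) <= enorm (V - W).
Proof.
have gamma_dotp X : dotp (gamma X) (gamma X) = dotp X X.
  by have [a dX] := decomposition X; rewrite -(Lam_dotp a) -dX.
rewrite ler_sqrt ?dotp_ge0 // !dotpBl !dotpBr !gamma_dotp (dotpC (gamma W)) (dotpC W).
by have := dotp_le_gamma V W; lra.
Qed.

Lemma fixed_increment_le f a b W Y h : tau f = f -> 0 < h ->
  decomposes a (W + h *: Y) -> decomposes b W ->
  `|dotp (f *m (Lam a - Lam b)) W| <= h * `|dotp (f *m (Lam a - Lam b)) Y|.
Proof.
move=> f_fixed h_gt0 dV dW; set E := Lam a - Lam b.
have at_W : dotp (f *m E) W <= 0.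
  rewrite mulmxBr dotpBl (dotp_decomposes _ dW) subr_le0 -{2}f_fixed.
  exact: dotp_Lam_le.
have at_V : 0 <= dotp (f *m E) (W + h *: Y).
  rewrite mulmxBr dotpBl (dotp_decomposes _ dV) subr_ge0 -{2}f_fixed.
  exact: dotp_Lam_le.
move: at_V; rewrite dotpDr dotpZr ler0_norm // => at_V.
have := ler_wpM2l (ltW h_gt0) (ler_norm (dotp (f *m E) Y)); lra.
Qed.

Lemma increment_le k (B : 'M[R]_(k, m)) (u : 'rV[R]_k) a b W Y h :
  (forall i, tau (row i B) = row i B) -> 0 < h ->
  decomposes a (W + h *: Y) -> decomposes b W ->
  dotp (u *m B) (gamma (W + h *: Y)) - dotp (u *m B) (gamma W) <=
    h * dotp (tau (u *m B)) (gamma Y) +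
    h * \sum_i `|u 0 i| * `|dotp (row i B *m (Lam a - Lam b)) Y|.
Proof.
move=> B_fixed h_gt0 dV dW; set w := u *m B; set E := Lam a - Lam b.
have -> : dotp w (gamma (W + h *: Y)) - dotp w (gamma W) =
    h * dotp (w *m Lam a) Y + dotp (w *m E) W.
  by rewrite -(dotp_decomposes _ dV) -(dotp_decomposes _ dW) dotpDr dotpZr mulmxBr dotpBl; ring.
apply: lerD; first by rewrite ler_wpM2l ?(ltW h_gt0) ?dotp_Lam_le.
rewrite /w (mulmx_sum_row u B) mulmx_suml.
rewrite (big_morph (fun x => dotp x W) (fun x y => dotpDl x y W) (dotp0l W)) mulr_sumr.
apply: le_trans (ler_norm _) _; apply: le_trans (ler_norm_sum _ _ _) _.
apply: ler_sum => i _; rewrite -scalemxAl dotpZl normrM mulrCA.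
by rewrite ler_wpM2l ?fixed_increment_le.
Qed.

Lemma residual_le a W Y h : 0 < h -> decomposes a (W + h *: Y) ->
  `|W - gamma W *m Lam a| <= 2 * h * enorm Y.
Proof.
move=> h_gt0 dV.
have -> : W - gamma W *m Lam a = (gamma (W + h *: Y) - gamma W) *m Lam a - h *: Y.
  by rewrite mulmxBl -dV addrAC addrK.
have gamma_step : `|(gamma (W + h *: Y) - gamma W) *m Lam a| <= h * enorm Y.
  apply: le_trans (mx_norm_le_enorm _) _; rewrite enorm_Lam.
  apply: le_trans (gamma_contraction _ _) _.
  by rewrite addrAC subrr add0r enormZ gtr0_norm.
have Y_step : `|h *: Y| <= h * enorm Y.
  by rewrite normrZ gtr0_norm // ler_wpM2l ?(ltW h_gt0) ?mx_norm_le_enorm.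
have := ler_normB ((gamma (W + h *: Y) - gamma W) *m Lam a) (h *: Y); lra.
Qed.

Hypothesis Lam_closed : closed (range Lam).

Definition far_from_decompositions W eta : set 'M[R]_(m, n) :=
  range Lam `&` [set L | forall b, decomposes b W -> eta <= `|L - Lam b|].

Lemma far_from_decompositions_compact W eta : compact (far_from_decompositions W eta).
Proof.
apply: (@mx_bounded_closed_compact _ _ _ _ 1) => [|_ [[a _ <-] _]].
  apply: closedI => //.
  have -> : [set L | forall b, decomposes b W -> eta <= `|L - Lam b|] =
      \bigcap_(b in decomposes^~ W) ~` ball (Lam b) eta.
    apply/seteqP; split => L /= L_far b dW; have := L_far b dW;
      by rewrite -ball_normE /= distrC leNgt => /negP.
  by apply: closed_bigI => b _; apply: open_closedC; exact: ball_open.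
by apply: mx_norm_le => // i j; exact: Lam_entry_le1.
Qed.

Lemma decomposition_usc W Y eta : 0 < eta ->
  exists2 d, 0 < d & forall h a, 0 < h -> h < d -> decomposes a (W + h *: Y) ->
    exists2 b, decomposes b W & `|Lam a - Lam b| < eta.
Proof.
move=> eta_gt0; set far := far_from_decompositions W eta.
have close_or_far a : (exists2 b, decomposes b W & `|Lam a - Lam b| < eta) \/ far (Lam a).
  have [|not_close] := pselect (exists2 b, decomposes b W & `|Lam a - Lam b| < eta).
    by left.
  right; split=> [|b dW]; first by exists a.
  by rewrite leNgt; apply/negP => close; apply: not_close; exists b.
have [far_ne|far_empty] := pselect (far !=set0); last first.
  exists 1 => // h a _ _ _; case: (close_or_far a) => // a_far.
  by exfalso; apply: far_empty; exists (Lam a).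
pose g L := `|W - gamma W *m L|.
have g_cont : continuous g.
  have residual_cont : continuous (fun L : 'M[R]_(m, n) => W - gamma W *m L).
    move=> L; apply: continuousB (@cst_continuous _ _ W L)
      (@mulmx_continuous_right R 1 m n (gamma W) L).
  by move=> L; exact: continuous_comp (residual_cont L) (@norm_continuous _ _ _).
have [_ /set_mem [[c _ <-] c_far] g_min] := compact_EVT_min far_ne
  (@far_from_decompositions_compact W eta) (continuous_subspaceT g_cont).
set mu := g (Lam c) in g_min.
have mu_gt0 : 0 < mu.
  rewrite normr_gt0 subr_eq0; apply/negP => /eqP dW.
  by have := c_far c dW; rewrite subrr normr0 leNgt eta_gt0.
have enormY_ge0 : 0 <= enorm Y by exact: sqrtr_ge0.
exists (mu / (2 * enorm Y + 1)) => [|h a h_gt0 h_lt dV]; first by rewrite divr_gt0 //; lra.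
case: (close_or_far a) => // a_far; exfalso.
have := g_min _ (mem_set a_far); have := residual_le h_gt0 dV.
by move: h_lt; rewrite ltr_pdivlMr /g; lra.
Qed.

Lemma dotp_gamma_increment_le k (B : 'M[R]_(k, m)) (u : 'rV[R]_k) X Y :
  (forall i, tau (row i B) = row i B) ->
  dotp (u *m B) (gamma (X + Y) - gamma X) <= dotp (tau (u *m B)) (gamma Y).
Proof.
move=> B_fixed; set w := u *m B.
pose psi t := dotp w (gamma (X + t *: Y)).
suff : psi 1 - psi 0 <= dotp (tau w) (gamma Y) by rewrite /psi scale1r scale0r addr0 dotpBr.
have enormY_ge0 : 0 <= enorm Y by exact: sqrtr_ge0.
apply: dini_le => [|t t_ge0 t_lt1 e e_gt0].
  apply: (@lipschitz_continuous _ _ _ _ (m%:R * `|w| * enorm Y + 1)) => [|s t].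
    by rewrite ltr_pwDr // !mulr_ge0.
  rewrite /psi -dotpBr; apply: le_trans (dotp_norm_le _ _) _.
  have step : `|gamma (X + s *: Y) - gamma (X + t *: Y)| <= `|s - t| * enorm Y.
    apply: le_trans (mx_norm_le_enorm _) _; apply: le_trans (gamma_contraction _ _) _.
    by rewrite opprD addrACA subrr add0r -scalerBl enormZ.
  have := ler_wpM2l (mulr_ge0 (ler0n R m) (normr_ge0 w)) step.
  by have := normr_ge0 (s - t); lra.
pose C := \sum_i `|u 0 i| * (n%:R * m%:R * `|row i B| * `|Y|).
have C_ge0 : 0 <= C by apply: sumr_ge0 => i _; rewrite !mulr_ge0.
have eta_gt0 : 0 < e / (C + 1) by rewrite divr_gt0 //; lra.
have [d d_gt0 usc] := decomposition_usc (X + t *: Y) Y eta_gt0.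
exists d => // h h_gt0 h_lt_d.
have [a dV] := decomposition (X + t *: Y + h *: Y).
have [b dW Lab] := usc h a h_gt0 h_lt_d dV.
have := increment_le u B_fixed h_gt0 dV dW.
rewrite -addrA -scalerDl -/(psi t) -/(psi (t + h)) -/w => /le_trans; apply.
rewrite mulrDl ![_ * h]mulrC lerD2l; apply: ler_wpM2l; first exact: ltW.
apply: le_trans (_ : `|Lam a - Lam b| * C <= e); last first.
  apply: le_trans (ler_wpM2r C_ge0 (ltW Lab)) _.
  by rewrite mulrAC ler_pdivrMr; [nra | lra].
rewrite /C mulr_sumr; apply: ler_sum => i _; rewrite mulrCA ler_wpM2l //.
exact: dotp_mulmx_le.
Qed.

End SpectralSystem.

Theorem theorem5p1 (R : realType) (m n : nat) (gT : finGroupType)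
    (act : gT -> 'rV[R]_m -> 'rV[R]_m) (gamma : 'rV[R]_n -> 'rV[R]_m)
    (A : Type) (Lam : A -> 'M[R]_(m, n)) :
  spectral_decomposition_system act gamma Lam ->
  closed (range Lam) ->
  forall X Y : 'rV[R]_n,
    conv_hull (orbit_set act (gamma Y)) (gamma (X + Y) - gamma X).
Proof.
move=> [act_iso [Lam_iso [[tau [tau_act [tau_orbit tau_Lam]]] [decomp dotp_le]]]] Lam_closed X Y.
have Lam_dotp a x y : dotp (x *m Lam a) (y *m Lam a) = dotp x y.
  exact: lin_isometry_dotp (Lam_iso a) x y.
have gamma_Lam a x : gamma (x *m Lam a) = tau x := tau_Lam a x.
have decomposition V : exists a, decomposes Lam gamma a V := decomp V.
have tau_act_orbit x : exists s, tau x = act s x by have [s _ <-] := tau_orbit x; exists s.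
have [k [B [B_fixed B_full]]] :=
  row_full_of_nonorthogonal (fixed_nonorthogonal act_iso tau_act tau_act_orbit).
apply: (@conv_hull_of_separation _ _ _ _ (fun i => act (enum_val i) (gamma Y))) => [i|w].
  by exists (enum_val i).
have /submxP [u ->] := submx_full w B_full.
have [s tau_uB] := tau_act_orbit (u *m B).
exists (enum_rank (s^-1)%g); rewrite enum_rankK -act_dotpV // -tau_uB.
exact: (@dotp_gamma_increment_le _ _ _ _ Lam gamma tau Lam_dotp gamma_Lam dotp_le
  decomposition Lam_closed _ B u X Y B_fixed).
Qed.
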